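(* Let $\Theta\subseteq\mathbb{R}^p$ be open, $U_\theta$ a differentiable family of $D\times D$ unitary matrices, and $\rho_0=|\psi_0\rangle\langle\psi_0|$ a pure state on $\mathbb{C}^D$. For the unitary channel $\rho\mapsto U_\theta\rho U_\theta^\dagger$ with canonical Kraus operators $\Upsilon_1=U_\theta$, $\Upsilon_k=0$ ($k\ge2$), one has $H_\theta=C_\Upsilon(\theta)$ if and only if $\mathrm{tr}\{U_\theta\rho_0(\frac{\partial U_\theta}{\partial\theta^l})^\dagger\}=0$ for all $l=1,\dots,p$.
   Context: $C_\Upsilon(\theta)$ is the $p\times p$ matrix with entries $4\sum_l\mathrm{Re}\,\mathrm{tr}\{\frac{\partial\Upsilon_l}{\partial\theta^j}\rho_0(\frac{\partial\Upsilon_l}{\partial\theta^k})^\dagger\}$. $H_\theta$ is the SLD quantum information matrix of $\rho_\theta=U_\theta\rho_0U_\theta^\dagger$, with entries $\mathrm{Re}\,\mathrm{tr}\{\lambda^j\rho_\theta\lambda^k\}$, where $\lambda^j$ is a Hermitian solution of $\frac{\partial\rho_\theta}{\partial\theta^j}=\frac12(\rho_\theta\lambda^j+\lambda^j\rho_\theta)$. *)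

From HB Require Import structures.
From mathcomp Require Import all_boot all_order all_algebra.
From mathcomp Require Import all_classical all_reals all_analysis.
From mathcomp Require Import complex.
Set Implicit Arguments. Unset Strict Implicit. Unset Printing Implicit Defensive.
Import Order.TTheory GRing.Theory Num.Theory.
Import numFieldNormedType.Exports.
Local Open Scope ring_scope.

Notation Cx R := (complex R).

Definition adjmx (R : realType) m n (A : 'M[Cx R]_(m, n)) : 'M[Cx R]_(n, m) :=
  \matrix_(i, j) (A j i)^*%C.

Definition evec (R : realType) p (l : 'I_p) : 'rV[R]_p := delta_mx 0 l.

Definition pderiv (R : realType) p m n (F : 'rV[R]_p -> 'M[Cx R]_(m, n))
  (l : 'I_p) (th : 'rV[R]_p) : 'M[Cx R]_(m, n) :=
  \matrix_(i, j)
    (Complex ('D_(@evec R p l) (fun t : 'rV[R]_p => complex.Re (F t i j)) th)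
             ('D_(@evec R p l) (fun t : 'rV[R]_p => complex.Im (F t i j)) th)).

Definition mx_differentiable (R : realType) p m n
  (F : 'rV[R]_p -> 'M[Cx R]_(m, n)) (th : 'rV[R]_p) : Prop :=
  forall i j, differentiable (fun t : 'rV[R]_p => complex.Re (F t i j)) th /\
              differentiable (fun t : 'rV[R]_p => complex.Im (F t i j)) th.

Definition unitary_mx (R : realType) D (U : 'M[Cx R]_D) : Prop :=
  U *m adjmx U = 1%:M /\ adjmx U *m U = 1%:M.

Definition hermitian_mx (R : realType) D (A : 'M[Cx R]_D) : Prop :=
  adjmx A = A.

Definition pure_state (R : realType) D (rho0 : 'M[Cx R]_D) : Prop :=
  exists psi : 'cV[Cx R]_D, adjmx psi *m psi = 1%:M /\ rho0 = psi *m adjmx psi.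

Definition C_Ups (R : realType) p D K (Ups : 'I_K -> 'rV[R]_p -> 'M[Cx R]_D)
  (rho0 : 'M[Cx R]_D) (th : 'rV[R]_p) : 'M[R]_p :=
  \matrix_(j, k) (4 * \sum_(l < K)
     complex.Re (\tr (pderiv (Ups l) j th *m rho0 *m adjmx (pderiv (Ups l) k th)))).

Definition is_SLD_family (R : realType) p D (rho : 'rV[R]_p -> 'M[Cx R]_D)
  (th : 'rV[R]_p) (lam : 'I_p -> 'M[Cx R]_D) : Prop :=
  forall j, hermitian_mx (lam j) /\
    pderiv rho j th = (2%:R^-1)%:M *m (rho th *m lam j + lam j *m rho th).

Definition SLD_info (R : realType) p D (rho : 'rV[R]_p -> 'M[Cx R]_D)
  (th : 'rV[R]_p) (lam : 'I_p -> 'M[Cx R]_D) : 'M[R]_p :=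
  \matrix_(j, k) complex.Re (\tr (lam j *m rho th *m lam k)).

Definition unitary_kraus (R : realType) p D K (U : 'rV[R]_p -> 'M[Cx R]_D)
  : 'I_K.+1 -> 'rV[R]_p -> 'M[Cx R]_D :=
  fun k th => if k == ord0 then U th else 0.

(* Write phi = U psi for the evolved state and g_l = (d_l U) psi.  Differentiating
   U^dagger U = 1 shows that the overlap a_l = <phi|g_l> is purely imaginary, and the
   SLD equation for the pure state phi phi^dagger then forces lam_l phi = 2 (g_l - a_l phi).
   Hence H_jk = Re <lam_k phi|lam_j phi> = C_jk + 4 Re (a_k a_j).  Since a_l^2 = -|a_l|^2,
   H = C exactly when every a_l vanishes, and tr{U rho0 (d_l U)^dagger} = -a_l. *)

From HB Require Import structures.
From mathcomp Require Import all_boot all_order all_algebra.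
From mathcomp Require Import all_classical all_reals all_analysis.
From mathcomp Require Import complex ring lra.
Set Implicit Arguments. Unset Strict Implicit. Unset Printing Implicit Defensive.
Import Order.TTheory GRing.Theory Num.Theory.
Import numFieldNormedType.Exports.
Local Open Scope ring_scope.

Local Notation Re := complex.Re.
Local Notation Im := complex.Im.

Section ComplexParts.
Variable R : realType.
Implicit Types x y z : Cx R.

Lemma ReD x y : Re (x + y) = Re x + Re y. Proof. by case: x; case: y. Qed.
Lemma ImD x y : Im (x + y) = Im x + Im y. Proof. by case: x; case: y. Qed.
Lemma ReM x y : Re (x * y) = Re x * Re y - Im x * Im y.
Proof. by case: x; case: y. Qed.
Lemma ImM x y : Im (x * y) = Re x * Im y + Im x * Re y.
Proof. by case: x => a b; case: y. Qed.
Lemma ReJ x : Re x^*%C = Re x. Proof. by case: x. Qed.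
Lemma ImJ x : Im x^*%C = - Im x. Proof. by case: x. Qed.

Lemma Re_sum n (h : 'I_n -> Cx R) : Re (\sum_(i < n) h i) = \sum_(i < n) Re (h i).
Proof. by elim/big_ind2: _ => // x a y b <- <-; rewrite ReD. Qed.
Lemma Im_sum n (h : 'I_n -> Cx R) : Im (\sum_(i < n) h i) = \sum_(i < n) Im (h i).
Proof. by elim/big_ind2: _ => // x a y b <- <-; rewrite ImD. Qed.

Lemma Re_natrM n z : Re (n%:R * z) = n%:R * Re z.
Proof.
elim: n => [|n IH]; first by rewrite !mul0r.
by rewrite !mulrSr !mulrDl ReD IH !mul1r.
Qed.

Lemma imaginary_sqr_eq0 z : z^*%C = - z -> Re (z * z) = 0 -> z = 0.
Proof.
case: z => x y /(congr1 (@complex.Re R)) /= xE => sq0.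
have x0 : x = 0 by lra.
move: sq0; rewrite x0 /= mul0r sub0r => /eqP.
by rewrite oppr_eq0 mulf_eq0 orbb => /eqP ->.
Qed.

End ComplexParts.

Section ComplexDerive.
Variables (R : realType) (V : normedModType R).
Implicit Types (f g : V -> Cx R) (x v : V).

Definition cderivable f x v :=
  derivable (fun t => Re (f t)) x v /\ derivable (fun t => Im (f t)) x v.

Definition cderive f x v :=
  Complex ('D_v (fun t => Re (f t)) x) ('D_v (fun t => Im (f t)) x).

Lemma cderivable_cst (c : Cx R) x v : cderivable (fun=> c) x v.
Proof. by split; apply: derivable_cst. Qed.

Lemma cderive_cst (c : Cx R) x v : cderive (fun=> c) x v = 0.
Proof. by rewrite /cderive !derive_cst. Qed.

Lemma cderivable_conj f x v : cderivable f x v -> cderivable (fun t => (f t)^*%C) x v.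
Proof.
case=> dRe dIm; split.
- by under eq_fun do rewrite ReJ.
- have -> : (fun t => Im (f t)^*%C) = - (fun t => Im (f t)) by apply/funext => t; rewrite ImJ.
  exact: derivableN.
Qed.

Lemma cderive_conj f x v : cderivable f x v ->
  cderive (fun t => (f t)^*%C) x v = (cderive f x v)^*%C.
Proof.
case=> _ dIm; rewrite /cderive.
have -> : (fun t => Re (f t)^*%C) = (fun t => Re (f t)) by apply/funext => t; rewrite ReJ.
have -> : (fun t => Im (f t)^*%C) = - (fun t => Im (f t)) by apply/funext => t; rewrite ImJ.
by rewrite (deriveN dIm).
Qed.

Section Product.
Variables (f g : V -> Cx R) (x v : V).
Hypotheses (df : cderivable f x v) (dg : cderivable g x v).

Let ReME : (fun t => Re (f t * g t)) =
  (fun t => Re (f t)) * (fun t => Re (g t)) - (fun t => Im (f t)) * (fun t => Im (g t)).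
Proof. by apply/funext => t; rewrite ReM. Qed.

Let ImME : (fun t => Im (f t * g t)) =
  (fun t => Re (f t)) * (fun t => Im (g t)) + (fun t => Im (f t)) * (fun t => Re (g t)).
Proof. by apply/funext => t; rewrite ImM. Qed.

Lemma cderivableM : cderivable (fun t => f t * g t) x v.
Proof.
case: df dg => dfRe dfIm [dgRe dgIm]; rewrite /cderivable ReME ImME; split.
- exact: derivableB (derivableM dfRe dgRe) (derivableM dfIm dgIm).
- exact: derivableD (derivableM dfRe dgIm) (derivableM dfIm dgRe).
Qed.

Lemma cderiveM : cderive (fun t => f t * g t) x v = cderive f x v * g x + f x * cderive g x v.
Proof.
case: df dg => dfRe dfIm [dgRe dgIm]; rewrite /cderive ReME ImME.
rewrite (deriveB (derivableM dfRe dgRe) (derivableM dfIm dgIm)).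
rewrite (deriveD (derivableM dfRe dgIm) (derivableM dfIm dgRe)).
rewrite (deriveM dfRe dgRe) (deriveM dfIm dgIm) (deriveM dfRe dgIm) (deriveM dfIm dgRe).
move: ('D_v _ x) ('D_v _ x) ('D_v _ x) ('D_v _ x) => a b c d.
case: (f x) => fr fi; case: (g x) => gr gi.
by rewrite /GRing.scale /=; congr Complex; ring.
Qed.
End Product.

Section Sum.
Variables (n : nat) (h : 'I_n -> V -> Cx R) (x v : V).
Hypothesis dh : forall i, cderivable (h i) x v.

Let ResumE : (fun t => Re (\sum_(i < n) h i t)) = \sum_(i < n) (fun t => Re (h i t)).
Proof. by apply/funext => t; rewrite Re_sum fct_sumE. Qed.

Let ImsumE : (fun t => Im (\sum_(i < n) h i t)) = \sum_(i < n) (fun t => Im (h i t)).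
Proof. by apply/funext => t; rewrite Im_sum fct_sumE. Qed.

Let dRe i : derivable (fun t => Re (h i t)) x v. Proof. exact: (dh i).1. Qed.
Let dIm i : derivable (fun t => Im (h i t)) x v. Proof. exact: (dh i).2. Qed.

Lemma cderivable_sum : cderivable (fun t => \sum_(i < n) h i t) x v.
Proof. by rewrite /cderivable ResumE ImsumE; split; apply: derivable_sum. Qed.

Lemma cderive_sum :
  cderive (fun t => \sum_(i < n) h i t) x v = \sum_(i < n) cderive (h i) x v.
Proof.
rewrite /cderive ResumE ImsumE (derive_sum dRe) (derive_sum dIm).
by apply/eqP; rewrite eq_complex Re_sum Im_sum !eqxx.
Qed.

End Sum.

Lemma near_eq_cderive f g x v :
  (\forall t \near x, f t = g t) -> cderive f x v = cderive g x v.
Proof. by move=> fg; congr Complex; apply: near_eq_derive; apply: filterS fg => t ->. Qed.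

End ComplexDerive.

Section ConjugateTranspose.
Variable R : realType.

Lemma adjmxK m n (A : 'M[Cx R]_(m, n)) : adjmx (adjmx A) = A.
Proof. by apply/matrixP => i j; rewrite !mxE conjcK. Qed.

Lemma adjmxM m n q (A : 'M[Cx R]_(m, n)) (B : 'M[Cx R]_(n, q)) :
  adjmx (A *m B) = adjmx B *m adjmx A.
Proof.
apply/matrixP => i j; rewrite !mxE rmorph_sum; apply: eq_bigr => k _.
by rewrite !mxE rmorphM mulrC.
Qed.

Lemma adjmxD m n (A B : 'M[Cx R]_(m, n)) : adjmx (A + B) = adjmx A + adjmx B.
Proof. by apply/matrixP => i j; rewrite !mxE rmorphD. Qed.

Lemma adjmxN m n (A : 'M[Cx R]_(m, n)) : adjmx (- A) = - adjmx A.
Proof. by apply/matrixP => i j; rewrite !mxE rmorphN. Qed.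

Lemma adjmxZ m n c (A : 'M[Cx R]_(m, n)) : adjmx (c *: A) = c^*%C *: adjmx A.
Proof. by apply/matrixP => i j; rewrite !mxE rmorphM. Qed.

Lemma mxtrace_adj n (A : 'M[Cx R]_n) : \tr (adjmx A) = (\tr A)^*%C.
Proof. by rewrite /mxtrace rmorph_sum; apply: eq_bigr => i _; rewrite mxE. Qed.

End ConjugateTranspose.

Lemma mxtraceN (V : zmodType) n (A : 'M[V]_n) : \tr (- A) = - \tr A.
Proof. exact: raddfN. Qed.

Lemma mxtraceB (V : zmodType) n (A B : 'M[V]_n) : \tr (A - B) = \tr A - \tr B.
Proof. exact: raddfB. Qed.

Section MatrixPartialDerivative.
Variables (R : realType) (p : nat).
Implicit Types (l : 'I_p) (th : 'rV[R]_p).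

Definition mx_pderivable m n (F : 'rV[R]_p -> 'M[Cx R]_(m, n)) l th :=
  forall i j, cderivable (fun t => F t i j) th (evec R l).

Lemma pderivE m n (F : 'rV[R]_p -> 'M[Cx R]_(m, n)) l th i j :
  pderiv F l th i j = cderive (fun t => F t i j) th (evec R l).
Proof. by rewrite mxE. Qed.

Lemma differentiable_mx_pderivable m n (F : 'rV[R]_p -> 'M[Cx R]_(m, n)) l th :
  mx_differentiable F th -> mx_pderivable F l th.
Proof. by move=> dF i j; case: (dF i j) => dRe dIm; split; apply: diff_derivable. Qed.

Lemma mx_pderivable_cst m n (A : 'M[Cx R]_(m, n)) l th : mx_pderivable (fun=> A) l th.
Proof. by move=> i j; apply: cderivable_cst. Qed.

Lemma pderiv_cst m n (A : 'M[Cx R]_(m, n)) l th : pderiv (fun=> A) l th = 0.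
Proof. by apply/matrixP => i j; rewrite pderivE cderive_cst mxE. Qed.

Lemma near_eq_pderiv m n (F G : 'rV[R]_p -> 'M[Cx R]_(m, n)) l th :
  (\forall t \near th, F t = G t) -> pderiv F l th = pderiv G l th.
Proof.
move=> FG; apply/matrixP => i j; rewrite !pderivE; apply: near_eq_cderive.
by apply: filterS FG => t ->.
Qed.

Section MatrixAdjoint.
Variables (m n : nat) (F : 'rV[R]_p -> 'M[Cx R]_(m, n)) (l : 'I_p) (th : 'rV[R]_p).
Hypothesis dF : mx_pderivable F l th.

Let adjE i j : (fun t => adjmx (F t) i j) = (fun t => (F t j i)^*%C).
Proof. by apply/funext => t; rewrite mxE. Qed.

Lemma mx_pderivable_adj : mx_pderivable (fun t => adjmx (F t)) l th.
Proof. by move=> i j; rewrite adjE; apply: cderivable_conj. Qed.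

Lemma pderiv_adj : pderiv (fun t => adjmx (F t)) l th = adjmx (pderiv F l th).
Proof. by apply/matrixP => i j; rewrite pderivE adjE cderive_conj // !mxE. Qed.

End MatrixAdjoint.

Section MatrixProduct.
Variables (m n q : nat) (F : 'rV[R]_p -> 'M[Cx R]_(m, n)) (G : 'rV[R]_p -> 'M[Cx R]_(n, q)).
Variables (l : 'I_p) (th : 'rV[R]_p).
Hypotheses (dF : mx_pderivable F l th) (dG : mx_pderivable G l th).

Let mulE i j : (fun t => (F t *m G t) i j) = (fun t => \sum_k F t i k * G t k j).
Proof. by apply/funext => t; rewrite mxE. Qed.

Let dFG i j k : cderivable (fun t => F t i k * G t k j) th (evec R l).
Proof. exact: cderivableM. Qed.

Lemma mx_pderivableM : mx_pderivable (fun t => F t *m G t) l th.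
Proof. by move=> i j; rewrite mulE; apply: cderivable_sum. Qed.

Lemma pderivM :
  pderiv (fun t => F t *m G t) l th = pderiv F l th *m G th + F th *m pderiv G l th.
Proof.
apply/matrixP => i j; rewrite pderivE mulE cderive_sum // !mxE -big_split /=.
by apply: eq_bigr => k _; rewrite cderiveM // !pderivE.
Qed.

End MatrixProduct.

Lemma pderiv_conjugation D (F : 'rV[R]_p -> 'M[Cx R]_D) (A : 'M[Cx R]_D) l th :
  mx_pderivable F l th ->
  pderiv (fun t => F t *m A *m adjmx (F t)) l th =
    pderiv F l th *m A *m adjmx (F th) + F th *m A *m adjmx (pderiv F l th).
Proof.
move=> dF; have dFA := mx_pderivableM dF (mx_pderivable_cst A l th).
rewrite (pderivM dFA (mx_pderivable_adj dF)) (pderivM dF (mx_pderivable_cst A l th)).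
by rewrite pderiv_cst mulmx0 addr0 (pderiv_adj dF).
Qed.

Lemma pderiv_isometry_skew m n (F : 'rV[R]_p -> 'M[Cx R]_(m, n)) l th :
  (\forall t \near th, adjmx (F t) *m F t = 1%:M) -> mx_pderivable F l th ->
  adjmx (pderiv F l th) *m F th + adjmx (F th) *m pderiv F l th = 0.
Proof.
move=> isoF dF; rewrite -(pderiv_adj dF) -(pderivM (mx_pderivable_adj dF) dF).
by rewrite (near_eq_pderiv l isoF) pderiv_cst.
Qed.

End MatrixPartialDerivative.

Section PureStateSLD.
Variables (R : realType) (n : nat) (phi : 'cV[Cx R]_n).
Hypothesis phi_unit : adjmx phi *m phi = 1%:M.

Lemma sld_pure_mul (g : 'cV[Cx R]_n) (lam : 'M[Cx R]_n) :
  adjmx g *m phi = - (adjmx phi *m g) ->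
  g *m adjmx phi + phi *m adjmx g =
    2%:R^-1 *: (phi *m adjmx phi *m lam + lam *m (phi *m adjmx phi)) ->
  lam *m phi = 2%:R *: (g - phi *m (adjmx phi *m g)).
Proof.
move=> skew sld.
have two0 : (2%:R : Cx R) != 0 by rewrite pnatr_eq0.
have sldphi := congr1 (mulmx^~ phi) sld; rewrite /= -scalemxAl in sldphi.
have Xphi : (g *m adjmx phi + phi *m adjmx g) *m phi = g - phi *m (adjmx phi *m g).
  by rewrite mulmxDl -!mulmxA phi_unit mulmx1 skew mulmxN.
have Lphi : (phi *m adjmx phi *m lam + lam *m (phi *m adjmx phi)) *m phi =
    phi *m (adjmx phi *m lam *m phi) + lam *m phi.
  by rewrite mulmxDl -!mulmxA phi_unit mulmx1.
have diag0 : adjmx phi *m lam *m phi = 0.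
  have := congr1 (mulmx (adjmx phi)) sldphi.
  rewrite Xphi Lphi mulmxBr -scalemxAr mulmxDr !mulmxA phi_unit !mul1mx subrr.
  set D := adjmx phi *m lam *m phi.
  by rewrite -mulr2n -(scaler_nat 2 D) scalerA mulVf // scale1r => <-.
by rewrite Xphi Lphi diag0 mulmx0 add0r in sldphi; rewrite sldphi scalerA mulfV // scale1r.
Qed.

Lemma mxtrace_sld_pure (gj gk : 'cV[Cx R]_n) (lj lk : 'M[Cx R]_n) :
  hermitian_mx lk -> adjmx gk *m phi = - (adjmx phi *m gk) ->
  lj *m phi = 2%:R *: (gj - phi *m (adjmx phi *m gj)) ->
  lk *m phi = 2%:R *: (gk - phi *m (adjmx phi *m gk)) ->
  \tr (lj *m (phi *m adjmx phi) *m lk) =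
    4%:R * (\tr (adjmx gk *m gj) + \tr (adjmx phi *m gk) * \tr (adjmx phi *m gj)).
Proof.
move=> herm_k skew_k lj_phi lk_phi.
set aj := \tr (adjmx phi *m gj) in lj_phi *; set ak := \tr (adjmx phi *m gk) in lk_phi *.
have akJ : ak^*%C = - ak by rewrite -mxtrace_adj adjmxM adjmxK skew_k mxtraceN.
have a11 g : adjmx phi *m g = (\tr (adjmx phi *m g))%:M by rewrite trace_mx11 -mx11_scalar.
rewrite (a11 gj) (a11 gk) !mul_mx_scalar in lj_phi lk_phi.
have -> : \tr (lj *m (phi *m adjmx phi) *m lk) = \tr (adjmx (lk *m phi) *m (lj *m phi)).
  by rewrite adjmxM herm_k [RHS]mxtrace_mulC !mulmxA.
rewrite lj_phi lk_phi adjmxZ conjc_nat adjmxD adjmxN adjmxZ akJ.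
rewrite -scalemxAl -scalemxAr mulmxBl !mulmxBr -!scalemxAl -!scalemxAr.
rewrite skew_k phi_unit !mxtraceZ !mxtraceB !mxtraceZ mxtraceN mxtrace1 -/aj -/ak.
by ring.
Qed.

End PureStateSLD.

Lemma C_Ups_unitary_kraus (R : realType) p D K (U : 'rV[R]_p -> 'M[Cx R]_D) rho0 th :
  C_Ups (@unitary_kraus R p D K U) rho0 th =
    \matrix_(j, k) (4 * Re (\tr (pderiv U j th *m rho0 *m adjmx (pderiv U k th)))).
Proof.
have Ups0 : @unitary_kraus R p D K U ord0 = U.
  by apply/funext => t; rewrite /unitary_kraus eqxx.
have UpsS i : @unitary_kraus R p D K U (lift ord0 i) = fun=> 0.
  by apply/funext => t; rewrite /unitary_kraus eq_sym (negbTE (neq_lift _ _)).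
apply/matrixP => j k; rewrite !mxE big_ord_recl Ups0 big1 ?addr0 // => i _.
by rewrite UpsS pderiv_cst !mul0mx mxtrace0.
Qed.

Section UnitaryChannel.
Variables (R : realType) (p D : nat) (U : 'rV[R]_p -> 'M[Cx R]_D).
Variables (psi : 'cV[Cx R]_D) (th : 'rV[R]_p).
Hypothesis U_unitary : \forall t \near th, unitary_mx (U t).
Hypotheses (U_diff : mx_differentiable U th) (psi_unit : adjmx psi *m psi = 1%:M).

Let rho0 := psi *m adjmx psi.
Let phi := U th *m psi.
Let g l := pderiv U l th *m psi.

Definition overlap l := \tr (adjmx phi *m g l).

Let dU l : mx_pderivable U l th. Proof. exact: differentiable_mx_pderivable. Qed.

Let phi_unit : adjmx phi *m phi = 1%:M.
Proof.
have [_ UU] := nbhs_singleton U_unitary.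
by rewrite adjmxM -mulmxA (mulmxA (adjmx (U th))) UU mul1mx.
Qed.

Let g_skew l : adjmx (g l) *m phi = - (adjmx phi *m g l).
Proof.
have UU : \forall t \near th, adjmx (U t) *m U t = 1%:M by apply: filterS U_unitary => t [].
move: (pderiv_isometry_skew UU (dU l)) => /(congr1 (fun X => adjmx psi *m X *m psi)).
rewrite mulmxDr mulmxDl mulmx0 mul0mx => /eqP; rewrite addr_eq0 => /eqP.
by rewrite /g /phi !adjmxM !mulmxA.
Qed.

Lemma overlapJ l : (overlap l)^*%C = - overlap l.
Proof. by rewrite -mxtrace_adj adjmxM adjmxK g_skew mxtraceN. Qed.

Lemma SLD_info_unitary_pure K lam :
  is_SLD_family (fun t => U t *m rho0 *m adjmx (U t)) th lam -> forall j k,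
  SLD_info (fun t => U t *m rho0 *m adjmx (U t)) th lam j k =
    C_Ups (@unitary_kraus R p D K U) rho0 th j k + 4 * Re (overlap k * overlap j).
Proof.
move=> sld.
have rho_th : U th *m rho0 *m adjmx (U th) = phi *m adjmx phi by rewrite adjmxM !mulmxA.
have sld_phi l : lam l *m phi = 2%:R *: (g l - phi *m (adjmx phi *m g l)).
  apply: sld_pure_mul; [exact: phi_unit | exact: g_skew |].
  have [_] := sld l; rewrite pderiv_conjugation // rho_th mul_scalar_mx => <-.
  by rewrite /g /phi /rho0 !adjmxM !mulmxA.
move=> j k; rewrite C_Ups_unitary_kraus !mxE rho_th.
rewrite (mxtrace_sld_pure phi_unit (sld k).1 (g_skew k) (sld_phi j) (sld_phi k)).
rewrite Re_natrM ReD mulrDr; congr (_ + _).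
by rewrite mxtrace_mulC /g adjmxM !mulmxA.
Qed.

Lemma mxtrace_U_rho0_pderiv_adj l :
  \tr (U th *m rho0 *m adjmx (pderiv U l th)) = - overlap l.
Proof.
by rewrite /overlap -mxtraceN -g_skew [RHS]mxtrace_mulC /g /phi /rho0 adjmxM !mulmxA.
Qed.

End UnitaryChannel.

Local Open Scope classical_set_scope.

Theorem lemma2p11 (R : realType) (p D K : nat) (Theta : set 'rV[R]_p)
  (U : 'rV[R]_p -> 'M[Cx R]_D) (rho0 : 'M[Cx R]_D) :
  open Theta ->
  (forall t, Theta t -> unitary_mx (U t)) ->
  (forall t, Theta t -> mx_differentiable U t) ->
  pure_state rho0 ->
  forall th, Theta th ->
  forall lam : 'I_p -> 'M[Cx R]_D,
    is_SLD_family (fun t => U t *m rho0 *m adjmx (U t)) th lam ->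
    (SLD_info (fun t => U t *m rho0 *m adjmx (U t)) th lam
       = C_Ups (@unitary_kraus R p D K U) rho0 th
     <-> forall l : 'I_p, \tr (U th *m rho0 *m adjmx (pderiv U l th)) = 0).
Proof.
move=> Theta_open U_unitary U_diff [psi [psi_unit ->]] th th_in lam sld.
have near_unitary : \forall t \near th, unitary_mx (U t).
  exact: filterS U_unitary (Theta_open th th_in).
have diff_th := U_diff th th_in.
have info := SLD_info_unitary_pure near_unitary diff_th psi_unit K sld.
have tr_dU := mxtrace_U_rho0_pderiv_adj psi near_unitary diff_th.
split=> [/matrixP HC l | tr0].
- rewrite tr_dU; apply/eqP; rewrite oppr_eq0; apply/eqP/imaginary_sqr_eq0.
    exact: overlapJ.
  have := HC l l; rewrite info => /eqP; rewrite addrC -subr_eq0 addrK mulf_eq0 pnatr_eq0.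
  by move=> /eqP.
- apply/matrixP => j k; rewrite info.
  have overlap0 l : overlap U psi th l = 0 by apply/eqP; rewrite -oppr_eq0 -tr_dU tr0.
  by rewrite !overlap0 mul0r mulr0 addr0.
Qed.
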